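(* Let $\mathcal{C}\subseteq\mathcal{I}$ and let $f$ be a nonnegative real-valued function on partitions of $\mathcal{C}$ that is monotone and subadditive on the partition semilattice (with respect to refinement and join). Then the instance-independent pricing function $p(\mathbf{Q})=f(\mathcal{P}_{\mathbf{Q}}\cap\mathcal{C})$ is arbitrage-free.
   Context: $\mathcal{I}$ is a countable nonempty set of database instances; queries are deterministic functions on $\mathcal{I}$; a query bundle is a finite tuple of queries from a language $\mathcal{L}$, evaluated componentwise; $B(\mathcal{L})$ is the set of bundles, closed under concatenation $\mathbf{Q}_1,\mathbf{Q}_2$. $\mathcal{P}_{\mathbf{Q}}$ is the partition of $\mathcal{I}$ into the equivalence classes of $D\sim D'\iff\mathbf{Q}(D)=\mathbf{Q}(D')$. For a partition $\mathcal{P}$ of $\mathcal{I}$, its restriction is $\mathcal{P}\cap\mathcal{C}=\{B\cap\mathcal{C}:B\in\mathcal{P},\,B\cap\mathcal{C}\ne\emptyset\}$. $\mathcal{P}_1\succeq\mathcal{P}_2$ means each block of $\mathcal{P}_1$ is contained in a block of $\mathcal{P}_2$; the join $\mathcal{P}_1\vee\mathcal{P}_2$ has as blocks the nonempty intersections of a block of $\mathcal{P}_1$ with a block of $\mathcal{P}_2$. $f$ monotone: $\mathcal{P}_1\succeq\mathcal{P}_2\Rightarrow f(\mathcal{P}_1)\ge f(\mathcal{P}_2)$; subadditive: $f(\mathcal{P}_1\vee\mathcal{P}_2)\le f(\mathcal{P}_1)+f(\mathcal{P}_2)$. An instance-independent pricing function $p$ is arbitrage-free if (i) whenever for all $D',D''\in\mathcal{I}$,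 $\mathbf{Q}_2(D')=\mathbf{Q}_2(D'')$ implies $\mathbf{Q}_1(D')=\mathbf{Q}_1(D'')$, we have $p(\mathbf{Q}_2)\ge p(\mathbf{Q}_1)$; and (ii) $p(\mathbf{Q}_1,\mathbf{Q}_2)\le p(\mathbf{Q}_1)+p(\mathbf{Q}_2)$ for all bundles. *)

From Stdlib Require Import Reals List.
Open Scope R_scope.

Definition iset (Inst : Type) := Inst -> Prop.
Definition ipartition (Inst : Type) := iset Inst -> Prop.

Definition partition_of {Inst : Type} (C : iset Inst) (P : ipartition Inst) : Prop :=
  (forall B, P B -> (exists x, B x) /\ (forall x, B x -> C x)) /\
  (forall x, C x -> exists B, P B /\ B x) /\
  (forall B B' x, P B -> P B' -> B x -> B' x -> B = B').

Definition refines {Inst : Type} (P1 P2 : ipartition Inst) : Prop :=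
  forall B1, P1 B1 -> exists B2, P2 B2 /\ (forall x, B1 x -> B2 x).

Definition pjoin {Inst : Type} (P1 P2 : ipartition Inst) : ipartition Inst :=
  fun B => exists B1 B2, P1 B1 /\ P2 B2 /\ (exists x, B1 x /\ B2 x) /\
                      B = (fun x => B1 x /\ B2 x).

Definition restrict {Inst : Type} (P : ipartition Inst) (C : iset Inst) : ipartition Inst :=
  fun B' => exists B, P B /\ (exists x, B x /\ C x) /\ B' = (fun x => B x /\ C x).

Definition bundle (Inst O : Type) := list (Inst -> O).

Definition eval_bundle {Inst O : Type} (Q : bundle Inst O) (D : Inst) : list O :=
  map (fun q => q D) Q.

Definition in_lang {Inst O : Type} (L : (Inst -> O) -> Prop) (Q : bundle Inst O) : Prop :=
  forall q, In q Q -> L q.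

Definition part_of_bundle {Inst O : Type} (Q : bundle Inst O) : ipartition Inst :=
  fun B => exists D, B = (fun D' => eval_bundle Q D' = eval_bundle Q D).

Definition determines {Inst O : Type} (Q2 Q1 : bundle Inst O) : Prop :=
  forall D' D'', eval_bundle Q2 D' = eval_bundle Q2 D'' ->
                 eval_bundle Q1 D' = eval_bundle Q1 D''.

(* arbitrage-freeness of an instance-independent pricing function on B(L);
   concatenation Q1,Q2 is list append. *)
Definition arbitrage_free {Inst O : Type} (L : (Inst -> O) -> Prop)
  (p : bundle Inst O -> R) : Prop :=
  (forall Q1 Q2, in_lang L Q1 -> in_lang L Q2 ->
     determines Q2 Q1 -> p Q2 >= p Q1) /\
  (forall Q1 Q2, in_lang L Q1 -> in_lang L Q2 ->
     p (Q1 ++ Q2) <= p Q1 + p Q2).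

(* If Q2 determines Q1, every fibre of Q2 lies in a fibre of Q1, so on C the
   partition of Q2 refines that of Q1 and monotonicity of f gives the first
   condition.  The fibres of the concatenation Q1,Q2 are exactly the
   intersections of the fibres of Q1 and Q2, so on C the join of the two
   partitions refines the partition of Q1,Q2; monotonicity and subadditivity
   then give the second condition. *)

From Stdlib Require Import Reals List Lra.
Open Scope R_scope.

Lemma partition_of_pjoin {Inst : Type} (C : iset Inst) (P1 P2 : ipartition Inst) :
  partition_of C P1 -> partition_of C P2 -> partition_of C (pjoin P1 P2).
Proof.
  intros [blocks1 [cover1 disj1]] [blocks2 [cover2 disj2]].
  split; [|split].
  - intros B [B1 [B2 [HB1 [_ [ne ->]]]]]. split; [exact ne|].
    intros x [h1 _]. exact (proj2 (blocks1 B1 HB1) x h1).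
  - intros x Cx.
    destruct (cover1 x Cx) as [B1 [HB1 h1]], (cover2 x Cx) as [B2 [HB2 h2]].
    exists (fun y => B1 y /\ B2 y). split; [|auto].
    exists B1, B2. repeat split; auto. exists x; auto.
  - intros B B' x [B1 [B2 [HB1 [HB2 [_ ->]]]]] [B1' [B2' [HB1' [HB2' [_ ->]]]]]
      [h1 h2] [h1' h2'].
    rewrite (disj1 B1 B1' x HB1 HB1' h1 h1'), (disj2 B2 B2' x HB2 HB2' h2 h2').
    reflexivity.
Qed.

Section Fibres.
Context {Inst T : Type} (C : iset Inst).

Definition fibre_partition (g : Inst -> T) : ipartition Inst :=
  fun B => exists D, B = fun D' => g D' = g D.

Notation fibres_on g := (restrict (fibre_partition g) C).

Lemma fibres_onP (g : Inst -> T) B :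
  fibres_on g B <-> exists D, C D /\ B = (fun x => g x = g D /\ C x).
Proof.
  split.
  - intros [B0 [[D ->] [[y [gy Cy]] ->]]].
    exists y. split; [exact Cy|]. rewrite <- gy. reflexivity.
  - intros [D [CD ->]]. exists (fun D' => g D' = g D).
    split; [exists D; reflexivity|]. split; [exists D; auto|reflexivity].
Qed.

Lemma partition_of_fibres_on (g : Inst -> T) : partition_of C (fibres_on g).
Proof.
  split; [|split].
  - intros B HB. apply fibres_onP in HB as [D [CD ->]].
    split; [exists D; auto|]. intros x [_ Cx]. exact Cx.
  - intros x Cx. exists (fun y => g y = g x /\ C y).
    split; [apply fibres_onP; exists x; auto|auto].
  - intros B B' x HB HB'.
    apply fibres_onP in HB as [D [_ ->]]. apply fibres_onP in HB' as [D' [_ ->]].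
    intros [gx _] [gx' _]. replace (g D') with (g D) by congruence. reflexivity.
Qed.

Lemma refines_fibres_on (g1 g2 : Inst -> T) :
  (forall a b, g2 a = g2 b -> g1 a = g1 b) -> refines (fibres_on g2) (fibres_on g1).
Proof.
  intros factor B HB. apply fibres_onP in HB as [D [CD ->]].
  exists (fun x => g1 x = g1 D /\ C x).
  split; [apply fibres_onP; exists D; auto|].
  intros x [gx Cx]. auto.
Qed.

Lemma pjoin_fibres_on_refines (g g1 g2 : Inst -> T) :
  (forall a b, g1 a = g1 b -> g2 a = g2 b -> g a = g b) ->
  refines (pjoin (fibres_on g1) (fibres_on g2)) (fibres_on g).
Proof.
  intros meet B [B1 [B2 [HB1 [HB2 [[x0 [h1 h2]] ->]]]]].
  apply fibres_onP in HB1 as [D1 [_ ->]]. apply fibres_onP in HB2 as [D2 [_ ->]].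
  destruct h1 as [e1 Cx0], h2 as [e2 _].
  exists (fun x => g x = g x0 /\ C x).
  split; [apply fibres_onP; exists x0; auto|].
  intros x [[f1 Cx] [f2 _]]. split; [apply meet; congruence|exact Cx].
Qed.

End Fibres.

Lemma eval_bundle_app_eq {Inst O : Type} (Q1 Q2 : bundle Inst O) a b :
  eval_bundle (Q1 ++ Q2) a = eval_bundle (Q1 ++ Q2) b <->
  eval_bundle Q1 a = eval_bundle Q1 b /\ eval_bundle Q2 a = eval_bundle Q2 b.
Proof.
  unfold eval_bundle. induction Q1 as [|q Q1 IH]; simpl.
  - tauto.
  - split.
    + intro E. injection E as Eq E12. apply IH in E12 as [E1 E2].
      rewrite Eq, E1, E2. auto.
    + intros [E1 E2]. injection E1 as Eq E1. rewrite Eq. f_equal. apply IH. auto.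
Qed.

Theorem lemma24 (Inst O : Type)
  (Icount : exists e : nat -> Inst, forall D, exists n, e n = D)
  (Inonempty : inhabited Inst)
  (L : (Inst -> O) -> Prop) (C : Inst -> Prop)
  (f : ipartition Inst -> R)
  (f_nonneg : forall P, partition_of C P -> 0 <= f P)
  (f_mono : forall P1 P2, partition_of C P1 -> partition_of C P2 ->
              refines P1 P2 -> f P1 >= f P2)
  (f_subadd : forall P1 P2, partition_of C P1 -> partition_of C P2 ->
              f (pjoin P1 P2) <= f P1 + f P2) :
  arbitrage_free L (fun Q => f (restrict (part_of_bundle Q) C)).
Proof.
  change (arbitrage_free L
            (fun Q => f (restrict (fibre_partition (eval_bundle Q)) C))).
  split; intros Q1 Q2 _ _.
  - intro determ. apply f_mono; try apply partition_of_fibres_on.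
    apply refines_fibres_on. exact determ.
  - set (g := eval_bundle (Q1 ++ Q2)).
    pose proof (partition_of_fibres_on C g) as part.
    pose proof (partition_of_fibres_on C (eval_bundle Q1)) as part1.
    pose proof (partition_of_fibres_on C (eval_bundle Q2)) as part2.
    pose proof (partition_of_pjoin C _ _ part1 part2) as part12.
    assert (join_le : f (pjoin (restrict (fibre_partition (eval_bundle Q1)) C)
                               (restrict (fibre_partition (eval_bundle Q2)) C))
                      >= f (restrict (fibre_partition g) C)).
    { apply f_mono; auto. apply pjoin_fibres_on_refines.
      intros a b E1 E2. apply eval_bundle_app_eq. auto. }
    pose proof (f_subadd _ _ part1 part2). lra.
Qed.
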